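(* For every graph $G$, $\hom(S_{2,1^0};G)^3\cdot\hom(S_{2,1^3};G)\ge \hom(S_{2,1^2};G)^3$.
   Context: All graphs are finite; $\hom(H;G)$ is the number of graph homomorphisms from $H$ to $G$. For $k\ge0$, $S_{2,1^k}$ is the tree with vertex set $\{1,\ldots,k+3\}$ and edge set $\{\{1,j\}:2\le j\le k+2\}\cup\{\{k+2,k+3\}\}$; in particular $S_{2,1^0}$ is the path with two edges. *)

From mathcomp Require Import all_boot.
Set Implicit Arguments. Unset Strict Implicit. Unset Printing Implicit Defensive.

Definition simple_graph (V : finType) (e : rel V) : Prop :=
  symmetric e /\ irreflexive e.

Definition hom (VH VG : finType) (eH : rel VH) (eG : rel VG) : nat :=
  #|[set f : {ffun VH -> VG} | [forall u, forall v, eH u v ==> eG (f u) (f v)]]|.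

(* S_{2,1^k} on vertices 'I_(k+3); the paper's vertex i (1-based) is the
   ordinal i-1.  Edges {1,j} (2<=j<=k+2) and {k+2,k+3}. *)
Definition S21_edge (k : nat) : rel 'I_(k + 3) :=
  fun u v =>
    [|| (val u == 0) && (1 <= val v <= k.+1),
        (val v == 0) && (1 <= val u <= k.+1),
        (val u == k.+1) && (val v == k.+2)
      | (val v == k.+1) && (val u == k.+2)].

Definition homS21 (k : nat) (V : finType) (e : rel V) : nat :=
  hom (@S21_edge k) e.

From mathcomp Require Import all_boot zify.
Set Implicit Arguments. Unset Strict Implicit. Unset Printing Implicit Defensive.

(* Write d(v) for the degree of v and s(v) = sum_{u ~ v} d(u) for the number of
   2-walks starting at v.  Rooting S_{2,1^k} at its centre gives
   hom(S_{2,1^k}; G) = sum_v d(v)^k s(v) =: M_k, and M_0 = sum_v d(v)^2 =: D.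
   Cauchy-Schwarz over the neighbourhood of v gives s(v)^2 <= d(v) D, and then
     M_2^2 <= D * sum d^2 s^2,   (sum d^2 s^2)^2 <= M_3 * sum d s^3,
     sum d s^3 <= D M_2,
   which combine into M_2^4 <= D^3 M_3 M_2. *)

Lemma card_family_prod (aT rT : finType) (F : aT -> pred rT) :
  #|[pred f : {ffun aT -> rT} | [forall x, F x (f x)]]| = \prod_x #|F x|.
Proof.
transitivity (foldr muln 1 [seq #|F x| | x : aT]).
  by rewrite -(card_family F); apply: eq_card => f; apply/forallP/familyP.
by rewrite foldrE big_map big_enum.
Qed.

Lemma leq_double_cross (a b ui wi uj wj : nat) :
  a ^ 2 <= ui * wi -> b ^ 2 <= uj * wj -> 2 * (a * b) <= ui * wj + uj * wi.
Proof.
move=> Ha Hb; rewrite -leq_sqr.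
apply: leq_trans (nat_AGM2 _ _); rewrite expnMn !expnMn -[2 ^ 2]/4 leq_pmul2l //.
rewrite (_ : ui * wj * (uj * wi) = ui * wi * (uj * wj)); last by lia.
exact: leq_mul.
Qed.

Lemma cauchy_schwarz_nat (I : finType) (P : pred I) (p u w : I -> nat) :
  (forall i, P i -> p i ^ 2 <= u i * w i) ->
  (\sum_(i | P i) p i) ^ 2 <= (\sum_(i | P i) u i) * \sum_(i | P i) w i.
Proof.
move=> Hp; rewrite -(leq_pmul2l (isT : 0 < 2)) -mulnn !big_distrlr /=.
apply: (@leq_trans (\sum_(i | P i) \sum_(j | P j) (u i * w j + u j * w i))).
  rewrite big_distrr /=; apply: leq_sum => i Pi.
  rewrite big_distrr /=; apply: leq_sum => j Pj.
  exact: leq_double_cross (Hp i Pi) (Hp j Pj).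
under eq_bigr => i _ do rewrite big_split.
by rewrite big_split /= [X in _ + X]exchange_big addnn -mul2n.
Qed.

Section MomentInequality.
Variables (I : finType) (d s : I -> nat).

Let M k := \sum_i d i ^ k * s i.
Let D := \sum_i d i ^ 2.

Hypothesis s_sqr_le : forall i, s i ^ 2 <= d i * D.

Lemma moment_ineq : M 2 ^ 3 <= D ^ 3 * M 3.
Proof.
pose Q := \sum_i d i ^ 2 * s i ^ 2.
pose R := \sum_i d i * s i ^ 3.
have M2_sqr : M 2 ^ 2 <= D * Q.
  by apply: cauchy_schwarz_nat => i _; apply: eq_leq; lia.
have Q_sqr : Q ^ 2 <= M 3 * R.
  by apply: cauchy_schwarz_nat => i _; apply: eq_leq; lia.
have R_le : R <= D * M 2.
  rewrite big_distrr /=; apply: leq_sum => i _.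
  apply: (@leq_trans (d i * s i * (d i * D))); last by apply: eq_leq; lia.
  by rewrite (expnS _ 2) mulnA leq_mul2l s_sqr_le orbT.
have M2_pow4 : M 2 ^ 4 <= D ^ 3 * M 3 * M 2.
  rewrite -[4]/(2 * 2) expnM; apply: (@leq_trans ((D * Q) ^ 2)).
    by rewrite leq_sqr.
  rewrite expnMn; apply: (@leq_trans (D ^ 2 * (M 3 * (D * M 2)))).
    by rewrite leq_mul2l (leq_trans Q_sqr) ?orbT // leq_mul2l R_le orbT.
  by apply: eq_leq; lia.
have [-> | M2_gt0] := posnP (M 2); first by rewrite exp0n.
by rewrite -(leq_pmul2r M2_gt0) -expnSr.
Qed.

End MomentInequality.

Section Degrees.
Variables (V : finType) (e : rel V).

Definition deg (v : V) : nat := #|e v|.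

Definition walks2 (v : V) : nat := \sum_(u | e v u) deg u.

Lemma sum_walks2 : symmetric e -> \sum_v walks2 v = \sum_v deg v ^ 2.
Proof.
move=> e_sym; rewrite (exchange_big_dep xpredT) //=; apply: eq_bigr => u _.
under eq_bigl => v do rewrite e_sym.
by rewrite sum_nat_const mulnn.
Qed.

Lemma walks2_sqr_le v : walks2 v ^ 2 <= deg v * \sum_u deg u ^ 2.
Proof.
have -> : walks2 v = \sum_(u | e v u) 1 * deg u.
  by apply: eq_bigr => u _; rewrite mul1n.
apply: (leq_trans (cauchy_schwarz_nat (u := fun _ => 1) (w := fun u => deg u ^ 2) _)).
  by move=> u _; rewrite !mul1n.
by rewrite sum1_card leq_mul2l [X in _ <= X](bigID (e v)) leq_addr orbT.
Qed.

End Degrees.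

Lemma hom_treeE (T V : finType) (eT : rel T) (e : rel V) (r : T) (par : T -> T) :
  symmetric e ->
  (forall a b, eT a b = ((a != r) && (b == par a)) || ((b != r) && (a == par b))) ->
  forall f : T -> V,
  [forall a, forall b, eT a b ==> e (f a) (f b)] =
  [forall x, (x != r) ==> e (f (par x)) (f x)].
Proof.
move=> e_sym eTE f; apply/forallP/forallP => [hom_f x | tree_f a].
  apply/implyP => x_nr; have /forallP/(_ x)/implyP := hom_f (par x); apply.
  by rewrite eTE x_nr eqxx orbT.
apply/forallP => b; apply/implyP; rewrite eTE.
case/orP => /andP[nr /eqP ->]; first by rewrite e_sym; exact: (implyP (tree_f _)).
exact: (implyP (tree_f _)).
Qed.

Section S21Count.
Variables (V : finType) (e : rel V) (k : nat).
Hypothesis e_sym : symmetric e.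

Definition S21_root : 'I_(k + 3) := Ordinal (ltn_addl k (isT : 0 < 3)).
Fact S21_mid_subproof : k.+1 < k + 3. Proof. lia. Qed.
Definition S21_mid : 'I_(k + 3) := Ordinal S21_mid_subproof.
Definition S21_parent (x : 'I_(k + 3)) : 'I_(k + 3) :=
  if val x == k.+2 then S21_mid else S21_root.

Lemma S21_edgeE a b :
  S21_edge a b = ((a != S21_root) && (b == S21_parent a))
              || ((b != S21_root) && (a == S21_parent b)).
Proof.
rewrite /S21_edge /S21_parent -!val_eqE /=.
case: a b => [a lt_a] [b lt_b] /=.
by do 2 case: ifP => ? /=; apply/idP/idP; lia.
Qed.

Section Fiber.
Variables v w : V.

(* Once the root and the middle vertex are sent to v and w, every parent is sent
   to its anchor, so the remaining constraints bear on one vertex at a time. *)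
Definition S21_anchor (y : 'I_(k + 3)) : V := if y == S21_mid then w else v.

Definition S21_fiber (x : 'I_(k + 3)) : pred V :=
  [pred u | [&& (x == S21_root) ==> (u == v), (x == S21_mid) ==> (u == w)
              & (x != S21_root) ==> e (S21_anchor (S21_parent x)) u]].

Lemma S21_fiberP (f : {ffun 'I_(k + 3) -> V}) :
  [forall a, forall b, S21_edge a b ==> e (f a) (f b)]
    && ((f S21_root, f S21_mid) == (v, w))
  = [forall x, S21_fiber x (f x)].
Proof.
have root_mid : (S21_root == S21_mid) = false by rewrite -val_eqE.
have anchorE : f S21_root = v -> f S21_mid = w ->
    forall x, f (S21_parent x) = S21_anchor (S21_parent x).
  move=> fr fm x; rewrite /S21_anchor /S21_parent.
  by case: ifP; rewrite ?eqxx ?root_mid.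
rewrite (hom_treeE e_sym S21_edgeE).
apply/andP/forallP => [[hom_f /eqP[fr fm]] x | fib_f].
  have /implyP tree_x := forallP hom_f x.
  rewrite /S21_fiber /= -(anchorE fr fm).
  apply/and3P; split; apply/implyP.
  - by move/eqP->; rewrite fr.
  - by move/eqP->; rewrite fm.
  - exact: tree_x.
have fr : f S21_root = v by case/and3P: (fib_f S21_root) => /implyP/(_ (eqxx _))/eqP.
have fm : f S21_mid = w by case/and3P: (fib_f S21_mid) => _ /implyP/(_ (eqxx _))/eqP.
split; last by rewrite fr fm.
apply/forallP => x; rewrite (anchorE fr fm).
by case/and3P: (fib_f x).
Qed.

Definition S21_fiber_card (i : nat) : nat :=
  if i == 0 then 1 else if i == k.+1 then nat_of_bool (e v w)
  else if i == k.+2 then deg e w else deg e v.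

Lemma card_S21_fiber (x : 'I_(k + 3)) : #|S21_fiber x| = S21_fiber_card (val x).
Proof.
have anchorE : S21_anchor (S21_parent x) = if val x == k.+2 then w else v.
  by rewrite /S21_anchor /S21_parent; case: (val x == k.+2); rewrite ?eqxx // -val_eqE.
rewrite /S21_fiber /S21_fiber_card anchorE -!val_eqE /=.
clear anchorE; case: x => [i lt_i] /=.
have [-> | i_n0] := eqVneq i 0.
  by rewrite (eq_card (B := pred1 v)) ?card1 // => u; rewrite !inE.
have [-> | i_nmid] := eqVneq i k.+1.
  rewrite ifF; last by lia.
  case: (boolP (e v w)) => [evw | nevw].
    rewrite (eq_card (B := pred1 w)) ?card1 // => u.
    by rewrite !inE /=; case: eqP => // ->.
  by rewrite eq_card0 // => u; rewrite !inE /=; case: eqP => // ->; apply/negbTE.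
by case: eqP.
Qed.

Lemma prod_card_S21_fiber :
  \prod_x #|S21_fiber x| = e v w * (deg e v ^ k * deg e w).
Proof.
under eq_bigr => x _ do rewrite card_S21_fiber.
rewrite -(big_mkord xpredT S21_fiber_card) addn3 big_nat_recl // !big_nat_recr //=.
rewrite /S21_fiber_card /= eqxx gtn_eqF // eqxx.
rewrite (eq_big_nat _ _ (F2 := fun => deg e v)) => [|i /andP[_ lt_ik]]; last first.
  by rewrite !ifF //; lia.
by rewrite prod_nat_const_nat subn0 mul1n mulnCA mulnA.
Qed.

End Fiber.

Lemma homS21E : homS21 k e = \sum_v deg e v ^ k * walks2 e v.
Proof.
rewrite /homS21 /hom -sum1_card.
pose ends (f : {ffun 'I_(k + 3) -> V}) := (f S21_root, f S21_mid).
rewrite (partition_big ends xpredT) //.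
transitivity (\sum_v \sum_w e v w * (deg e v ^ k * deg e w)).
  rewrite pair_big /=; apply: eq_bigr => -[v w] _.
  rewrite -prod_card_S21_fiber -card_family_prod -sum1_card.
  by apply: eq_bigl => f; rewrite inE S21_fiberP.
apply: eq_bigr => v _; rewrite /walks2 big_distrr /= [RHS]big_mkcond /=.
by apply: eq_bigr => w _; case: (e v w); rewrite ?mul1n ?mul0n ?muln0.
Qed.

End S21Count.

Theorem theorem3p2 (V : finType) (e : rel V) (He : simple_graph e) :
  homS21 2 e ^ 3 <= homS21 0 e ^ 3 * homS21 3 e.
Proof.
case: He => e_sym _.
rewrite !(homS21E _ e_sym).
have -> : \sum_v deg e v ^ 0 * walks2 e v = \sum_v deg e v ^ 2.
  by rewrite -(sum_walks2 e_sym); apply: eq_bigr => v _; rewrite mul1n.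
exact: moment_ineq (walks2_sqr_le e).
Qed.
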